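(* Let $S$ be a $0$-left cancellative semigroup which is categorical at zero, let $r\in S$, and let $\sigma$ be a maximal string with $\sigma\cap rS\neq\emptyset$. Then $r^{-1}*\sigma=\{t\in S: rt\in\sigma\}$ is a maximal string.
   Context: $S$ has zero $0$; $0$-left cancellative: $st=sr\neq0\Rightarrow t=r$; categorical at zero: $rs\neq0$ and $st\neq0$ imply $rst\neq0$. Let $\tilde S=S\cup\{1\}$ with $1$ an adjoined identity; for $s,t\in S$, $s\mid t$ means $t\in s\tilde S$. A string is a nonempty $\sigma\subseteq S$ such that (i) $0\notin\sigma$; (ii) if $s\mid t$ and $t\in\sigma$ then $s\in\sigma$; (iii) for all $s_1,s_2\in\sigma$ there is $s\in\sigma$ with $s_1\mid s$ and $s_2\mid s$. A string is maximal if it is not properly contained in another string. *)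

Section Defs.
Variables (S : Type) (mul : S -> S -> S) (z : S).

Definition semigroup_with_zero : Prop :=
  (forall x y w, mul x (mul y w) = mul (mul x y) w) /\
  (forall x, mul z x = z) /\ (forall x, mul x z = z).

Definition zero_left_cancellative : Prop :=
  forall s t r, mul s t = mul s r -> mul s t <> z -> t = r.

Definition categorical_at_zero : Prop :=
  forall r s t, mul r s <> z -> mul s t <> z -> mul (mul r s) t <> z.

(* s | t  iff  t in s S~, with S~ = S + adjoined identity *)
Definition sdivides (s t : S) : Prop := t = s \/ exists u, t = mul s u.

Definition is_string (sigma : S -> Prop) : Prop :=
  (exists s, sigma s) /\
  ~ sigma z /\
  (forall s t, sdivides s t -> sigma t -> sigma s) /\
  (forall s1 s2, sigma s1 -> sigma s2 ->
     exists s, sigma s /\ sdivides s1 s /\ sdivides s2 s).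

Definition is_maximal_string (sigma : S -> Prop) : Prop :=
  is_string sigma /\
  forall tau, is_string tau -> (forall x, sigma x -> tau x) ->
    forall x, tau x -> sigma x.

End Defs.
Arguments semigroup_with_zero {S}.
Arguments zero_left_cancellative {S}.
Arguments categorical_at_zero {S}.
Arguments sdivides {S}.
Arguments is_string {S}.
Arguments is_maximal_string {S}.


(* The string [r^-1 * sigma] is contained in any larger string [tau]; conversely
   the divisors of the products [r t], [t] in [tau], form a string
   [r * tau] (categoricity at zero keeps [0] out of it), and [r * tau]
   contains [sigma] because every element of [sigma] and some [r t0] have a
   common multiple in [sigma], necessarily of the form [r a].  Maximality of
   [sigma] then gives [r * tau = sigma], i.e. [tau] lies in [r^-1 * sigma]. *)

Section Strings.
Variables (S : Type) (mul : S -> S -> S) (z : S).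
Hypothesis hS : semigroup_with_zero mul z.

Definition left_translate (r : S) (tau : S -> Prop) (x : S) : Prop :=
  exists t, tau t /\ sdivides mul x (mul r t).

Lemma sdivides_refl x : sdivides mul x x.
Proof. now left. Qed.

Lemma sdivides_trans x y w :
  sdivides mul x y -> sdivides mul y w -> sdivides mul x w.
Proof.
  destruct hS as [hA _].
  intros [->|[u ->]] [->|[v ->]].
  - now left.
  - now right; exists v.
  - now right; exists u.
  - now right; exists (mul u v); rewrite hA.
Qed.

Lemma sdivides_mul2l r x y :
  sdivides mul x y -> sdivides mul (mul r x) (mul r y).
Proof.
  destruct hS as [hA _].
  intros [->|[u ->]]; [now left | right; exists u; apply hA].
Qed.

Lemma sdivides_mul_factor r t s :
  sdivides mul (mul r t) s -> exists a, s = mul r a /\ sdivides mul t a.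
Proof.
  destruct hS as [hA _].
  intros [->|[u ->]].
  - exists t; split; [reflexivity | apply sdivides_refl].
  - exists (mul t u); split; [now rewrite hA | now right; exists u].
Qed.

Lemma zero_sdivides x : sdivides mul z x -> x = z.
Proof. destruct hS as [_ [hz1 _]]; now intros [->|[u ->]]. Qed.

Lemma mul_sdivides_neq0 r t s :
  categorical_at_zero mul z ->
  mul r t <> z -> sdivides mul t s -> s <> z -> mul r s <> z.
Proof.
  destruct hS as [hA _].
  intros hcat hrt [->|[v ->]] hs; [exact hrt |].
  rewrite hA; exact (hcat r t v hrt hs).
Qed.

Lemma string_left_quotient r sigma :
  zero_left_cancellative mul z -> is_string mul z sigma ->
  (exists t, sigma (mul r t)) -> is_string mul z (fun t => sigma (mul r t)).
Proof.
  destruct hS as [_ [_ hz2]].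
  intros hcanc [_ [hnz [hher hdir]]] hmeet.
  split; [exact hmeet |]; split; [now rewrite hz2 |]; split.
  - intros s t hst ht; exact (hher _ _ (sdivides_mul2l r _ _ hst) ht).
  - intros s1 s2 h1 h2.
    destruct (hdir _ _ h1 h2) as [s [hs [d1 d2]]].
    destruct (sdivides_mul_factor _ _ _ d1) as [a [-> da]].
    destruct (sdivides_mul_factor _ _ _ d2) as [b [eb db]].
    assert (a = b) as <-.
    { apply (hcanc r); [exact eb | intros e; apply hnz; now rewrite <- e]. }
    now exists a.
Qed.

Lemma string_left_translate r tau t0 :
  categorical_at_zero mul z -> is_string mul z tau ->
  tau t0 -> mul r t0 <> z -> is_string mul z (left_translate r tau).
Proof.
  intros hcat [_ [tnz [_ tdir]]] ht0 hrt0.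
  split; [| split; [| split]].
  - exists (mul r t0), t0; split; [exact ht0 | apply sdivides_refl].
  - intros [t [ht dt]].
    destruct (tdir _ _ ht ht0) as [s [hs [dts dt0s]]].
    apply (mul_sdivides_neq0 r t0 s hcat hrt0 dt0s); [intros ->; exact (tnz hs) |].
    apply zero_sdivides; rewrite <- (zero_sdivides _ dt).
    exact (sdivides_mul2l r _ _ dts).
  - intros s x dsx [t [ht dx]]; exists t; split; [exact ht |].
    exact (sdivides_trans _ _ _ dsx dx).
  - intros x1 x2 [t1 [h1 d1]] [t2 [h2 d2]].
    destruct (tdir _ _ h1 h2) as [t [ht [e1 e2]]].
    exists (mul r t); split; [exists t; split; [exact ht | apply sdivides_refl] |].
    split; eapply sdivides_trans; eauto; apply sdivides_mul2l; assumption.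
Qed.

Lemma string_sub_left_translate r sigma tau t0 :
  is_string mul z sigma -> sigma (mul r t0) ->
  (forall t, sigma (mul r t) -> tau t) ->
  forall x, sigma x -> left_translate r tau x.
Proof.
  intros [_ [_ [_ hdir]]] ht0 hsub x hx.
  destruct (hdir _ _ hx ht0) as [s [hs [dx dr]]].
  destruct (sdivides_mul_factor _ _ _ dr) as [a [-> _]].
  exists a; split; [exact (hsub _ hs) | exact dx].
Qed.

End Strings.

Arguments left_translate {S}.

Theorem proposition10p20 (S : Type) (mul : S -> S -> S) (z : S)
  (hS : semigroup_with_zero mul z)
  (hcanc : zero_left_cancellative mul z)
  (hcat : categorical_at_zero mul z)
  (r : S) (sigma : S -> Prop)
  (hmax : is_maximal_string mul z sigma)
  (hmeet : exists t, sigma (mul r t)) :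
  is_maximal_string mul z (fun t => sigma (mul r t)).
Proof.
  destruct hmax as [hsigma hmx].
  destruct hmeet as [t0 ht0].
  split; [exact (string_left_quotient _ _ _ hS r sigma hcanc hsigma (ex_intro _ t0 ht0)) |].
  intros tau htau hsub x hx.
  assert (hrt0 : mul r t0 <> z).
  { intros e; apply (proj1 (proj2 hsigma)); now rewrite <- e. }
  apply (hmx (left_translate mul r tau)).
  - exact (string_left_translate _ _ _ hS r tau t0 hcat htau (hsub _ ht0) hrt0).
  - exact (string_sub_left_translate _ _ _ hS r sigma tau t0 hsigma ht0 hsub).
  - exists x; split; [exact hx | apply sdivides_refl].
Qed.
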